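(* For every formula $A$ of $\mathbf{L_1}$, if $\vdash_T A$ then $\vdash_H A$.
   Context: Formulas of $\mathbf{L_1}$: built from atomic formulas $\epsilon ab$ ($a,b$ name variables, possibly equal) with primitive connectives $\vee,\sim$; $\wedge,\supset,\equiv$ defined as usual. $\vdash_H A$: $A$ belongs to the smallest set of formulas containing all instances of classical propositional tautologies and all formulas $\epsilon ab\supset\epsilon aa$, $(\epsilon ab\wedge\epsilon bc)\supset\epsilon ac$, $(\epsilon ab\wedge\epsilon bb)\supset\epsilon ba$, closed under modus ponens. Positive/negative parts (occurrences): $A$ is a positive part of $A$; if $B\vee C$ is a positive part then $B,C$ are positive parts; if $\sim B$ is a positive part then $B$ is a negative part; if $\sim B$ is a negative part then $B$ is a positive part. $F[B_+]$ ($G[B_-]$) denotes a formula with a specified occurrence of $B$ as positive (negative) part; $F[B_+,C_-]$ etc. denote specified non-overlapping occurrences. Tableaux: reduction rules ($\vee_-$) $G[B\vee C_-]$ $\mapsto$ two branches $G[B\vee C_-]\vee\sim B$, $G[B\vee C_-]\vee\sim C$; ($\epsilon_1$) $G[\epsilon ab_-]\mapsto G[\epsilon ab_-]\vee\sim\epsilon aa$; ($\epsilon_2$) $G[\epsilon ab_-,\epsilon bc_-]\mapsto G[\epsilon ab_-,\epsilon bc_-]\vee\sim\epsilon ac$; ($\epsilon_{3b}$) $G[\epsilon ab_-,\epsilon bb_-]\mapsto G[\epsilon ab_-,\epsilon bb_-]\vee\sim\epsilon ba$. A tableau for $A$ is a finite tree with root $A$ whose non-leaf nodes have as children the result of applying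 one rule. A branch is closed if its last formula has the form $F[B_+,B_-]$; a tableau is closed if all its branches are closed. $\vdash_T A$: $A$ has a closed tableau. *)

From Stdlib Require Import Bool.

Inductive form : Type :=
| Eps : nat -> nat -> form
| Or  : form -> form -> form
| Not : form -> form.

Definition Imp (A B : form) : form := Or (Not A) B.
Definition And (A B : form) : form := Not (Or (Not A) (Not B)).

Inductive pform : Type :=
| PVar : nat -> pform
| POr  : pform -> pform -> pform
| PNot : pform -> pform.

Fixpoint peval (v : nat -> bool) (P : pform) : bool :=
  match P with
  | PVar n => v n
  | POr P Q => peval v P || peval v Q
  | PNot P => negb (peval v P)
  end.

Definition tautology (P : pform) : Prop := forall v, peval v P = true.

Fixpoint psubst (s : nat -> form) (P : pform) : form :=
  match P with
  | PVar n => s n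
  | POr P Q => Or (psubst s P) (psubst s Q)
  | PNot P => Not (psubst s P)
  end.

Definition taut_instance (A : form) : Prop :=
  exists (P : pform) (s : nat -> form), tautology P /\ A = psubst s P.

Inductive Hprov : form -> Prop :=
| H_taut : forall A, taut_instance A -> Hprov A
| H_ax1 : forall a b, Hprov (Imp (Eps a b) (Eps a a))
| H_ax2 : forall a b c, Hprov (Imp (And (Eps a b) (Eps b c)) (Eps a c))
| H_ax3 : forall a b, Hprov (Imp (And (Eps a b) (Eps b b)) (Eps b a))
| H_mp : forall A B, Hprov A -> Hprov (Imp A B) -> Hprov B.

(** One-hole contexts = specified occurrences of a subformula. *)
Inductive ctx : Type :=
| Hole : ctx
| COrL : ctx -> form -> ctx
| COrR : form -> ctx -> ctx
| CNot : ctx -> ctx.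

Fixpoint plug (c : ctx) (X : form) : form :=
  match c with
  | Hole => X
  | COrL c C => Or (plug c X) C
  | COrR C c => Or C (plug c X)
  | CNot c => Not (plug c X)
  end.

(** [rel c q p]: when the top of the context is a part of polarity [q]
    (true = positive, false = negative), the hole is a part of polarity [p].
    Following the definition: disjuncts of a POSITIVE disjunction are
    positive parts; the argument of a negation is a part of opposite
    polarity; disjuncts of a negative disjunction are not parts. *)
Inductive rel : ctx -> bool -> bool -> Prop :=
| rel_hole : forall q, rel Hole q q
| rel_orl : forall c C p, rel c true p -> rel (COrL c C) true p
| rel_orr : forall C c p, rel c true p -> rel (COrR C c) true p
| rel_not : forall c q p, rel c (negb q) p -> rel (CNot c) q p.

(** [pos_occ c] / [neg_occ c]: the hole of [c] is a positive / negative
    part of the whole formula (the whole formula being a positive part). *)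
Definition pos_occ (c : ctx) : Prop := rel c true true.
Definition neg_occ (c : ctx) : Prop := rel c true false.

(** Two-hole contexts with non-overlapping holes: they diverge at a
    disjunction. [plug2 d X Y] puts X in hole 1 and Y in hole 2. *)
Inductive ctx2 : Type :=
| Split12 : ctx -> ctx -> ctx2
| Split21 : ctx -> ctx -> ctx2
| C2OrL : ctx2 -> form -> ctx2
| C2OrR : form -> ctx2 -> ctx2
| C2Not : ctx2 -> ctx2.

Fixpoint plug2 (d : ctx2) (X Y : form) : form :=
  match d with
  | Split12 c1 c2 => Or (plug c1 X) (plug c2 Y)
  | Split21 c1 c2 => Or (plug c2 Y) (plug c1 X)
  | C2OrL d C => Or (plug2 d X Y) C
  | C2OrR C d => Or C (plug2 d X Y)
  | C2Not d => Not (plug2 d X Y)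
  end.

Inductive rel2 : ctx2 -> bool -> bool -> bool -> Prop :=
| rel2_12 : forall c1 c2 p1 p2,
    rel c1 true p1 -> rel c2 true p2 -> rel2 (Split12 c1 c2) true p1 p2
| rel2_21 : forall c1 c2 p1 p2,
    rel c1 true p1 -> rel c2 true p2 -> rel2 (Split21 c1 c2) true p1 p2
| rel2_orl : forall d C p1 p2, rel2 d true p1 p2 -> rel2 (C2OrL d C) true p1 p2
| rel2_orr : forall C d p1 p2, rel2 d true p1 p2 -> rel2 (C2OrR C d) true p1 p2
| rel2_not : forall d q p1 p2, rel2 d (negb q) p1 p2 -> rel2 (C2Not d) q p1 p2.

Definition rule_or (G G1 G2 : form) : Prop :=
  exists c B C, neg_occ c /\ G = plug c (Or B C) /\
                G1 = Or G (Not B) /\ G2 = Or G (Not C).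

Definition rule_eps (G G' : form) : Prop :=
  (exists c a b, neg_occ c /\ G = plug c (Eps a b) /\
                 G' = Or G (Not (Eps a a)))
  \/ (exists d a b c, rel2 d true false false /\ G = plug2 d (Eps a b) (Eps b c) /\
                 G' = Or G (Not (Eps a c)))
  \/ (exists d a b, rel2 d true false false /\ G = plug2 d (Eps a b) (Eps b b) /\
                 G' = Or G (Not (Eps b a))).

Definition closed_form (F : form) : Prop :=
  exists d B, rel2 d true true false /\ F = plug2 d B B.

Inductive tree : Type :=
| Leaf : form -> tree
| Node1 : form -> tree -> tree
| Node2 : form -> tree -> tree -> tree.

Definition root (t : tree) : form :=
  match t with Leaf f => f | Node1 f _ => f | Node2 f _ _ => f end.

Fixpoint is_tableau (t : tree) : Prop :=
  match t with
  | Leaf _ => True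
  | Node1 f t1 => rule_eps f (root t1) /\ is_tableau t1
  | Node2 f t1 t2 => rule_or f (root t1) (root t2) /\ is_tableau t1 /\ is_tableau t2
  end.

Fixpoint all_closed (t : tree) : Prop :=
  match t with
  | Leaf f => closed_form f
  | Node1 _ t1 => all_closed t1
  | Node2 _ t1 t2 => all_closed t1 /\ all_closed t2
  end.

Definition Tprov (A : form) : Prop :=
  exists t, root t = A /\ is_tableau t /\ all_closed t.

(* Since atoms can be coded by propositional variables, every
   formula true under all valuations is an instance of a tautology, hence
   [Hprov]; consequently [Hprov] is closed under propositional consequence.

   The polarity of a part controls the value of the whole formula: if a
   positive part is true, or a negative part is false, the formula is true.
   A two-hole context is a one-hole context for each of its holes, so the
   same holds for two-hole contexts.  Hence closed formulas F[B_+, B_-] are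
   valid, and each reduction rule is backwards sound: the rule's premise
   follows propositionally from its conclusions (and, for the epsilon rules,
   the corresponding axiom). *)

From Stdlib Require Import Bool Cantor.

Fixpoint feval (w : nat -> nat -> bool) (A : form) : bool :=
  match A with
  | Eps a b => w a b
  | Or A B => feval w A || feval w B
  | Not A => negb (feval w A)
  end.

Fixpoint skeleton (A : form) : pform :=
  match A with
  | Eps a b => PVar (to_nat (a, b))
  | Or A B => POr (skeleton A) (skeleton B)
  | Not A => PNot (skeleton A)
  end.

Definition atom_of_code (n : nat) : form := Eps (fst (of_nat n)) (snd (of_nat n)).

Lemma psubst_skeleton (A : form) : psubst atom_of_code (skeleton A) = A.
Proof.
  induction A; cbn [psubst skeleton]; try congruence.
  unfold atom_of_code; rewrite cancel_of_to; reflexivity.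
Qed.

Lemma peval_skeleton (v : nat -> bool) (A : form) :
  peval v (skeleton A) = feval (fun a b => v (to_nat (a, b))) A.
Proof. induction A; cbn [peval skeleton feval]; congruence. Qed.

Lemma valid_Hprov (A : form) : (forall w, feval w A = true) -> Hprov A.
Proof.
  intros Hvalid. apply H_taut. exists (skeleton A), atom_of_code. split.
  - intros v. rewrite peval_skeleton. apply Hvalid.
  - symmetry; apply psubst_skeleton.
Qed.

Lemma Hprov_conseq2 (A B C : form) : Hprov A -> Hprov B ->
  (forall w, feval w A = true -> feval w B = true -> feval w C = true) ->
  Hprov C.
Proof.
  intros HA HB Hsem.
  assert (Himp : Hprov (Imp A (Imp B C))).
  { apply valid_Hprov. intros w. simpl. specialize (Hsem w).
    destruct (feval w A), (feval w B), (feval w C); simpl; auto. }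
  apply (H_mp B); [exact HB|]. apply (H_mp A); [exact HA|exact Himp].
Qed.

Lemma part_value (c : ctx) (q p : bool) (w : nat -> nat -> bool) (X : form) :
  rel c q p -> feval w X = p -> feval w (plug c X) = q.
Proof.
  intros R; induction R; simpl; intros E; auto.
  - rewrite IHR; auto.
  - rewrite IHR; auto; apply orb_true_r.
  - rewrite IHR; auto; apply negb_involutive.
Qed.

Fixpoint hole1 (d : ctx2) (Y : form) : ctx :=
  match d with
  | Split12 c1 c2 => COrL c1 (plug c2 Y)
  | Split21 c1 c2 => COrR (plug c2 Y) c1
  | C2OrL d C => COrL (hole1 d Y) C
  | C2OrR C d => COrR C (hole1 d Y)
  | C2Not d => CNot (hole1 d Y)
  end.

Fixpoint hole2 (d : ctx2) (X : form) : ctx :=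
  match d with
  | Split12 c1 c2 => COrR (plug c1 X) c2
  | Split21 c1 c2 => COrL c2 (plug c1 X)
  | C2OrL d C => COrL (hole2 d X) C
  | C2OrR C d => COrR C (hole2 d X)
  | C2Not d => CNot (hole2 d X)
  end.

Lemma plug2_hole1 (d : ctx2) (X Y : form) : plug2 d X Y = plug (hole1 d Y) X.
Proof. induction d; simpl; congruence. Qed.

Lemma plug2_hole2 (d : ctx2) (X Y : form) : plug2 d X Y = plug (hole2 d X) Y.
Proof. induction d; simpl; congruence. Qed.

Lemma rel2_hole1 (d : ctx2) (q p1 p2 : bool) (Y : form) :
  rel2 d q p1 p2 -> rel (hole1 d Y) q p1.
Proof. intros R; induction R; simpl; constructor; auto. Qed.

Lemma rel2_hole2 (d : ctx2) (q p1 p2 : bool) (X : form) :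
  rel2 d q p1 p2 -> rel (hole2 d X) q p2.
Proof. intros R; induction R; simpl; constructor; auto. Qed.

Lemma false_neg_part (c : ctx) (w : nat -> nat -> bool) (X : form) :
  neg_occ c -> feval w (plug c X) = false -> feval w X = true.
Proof.
  intros N E. destruct (feval w X) eqn:EX; auto.
  rewrite (part_value _ _ _ _ _ N EX) in E; discriminate.
Qed.

Lemma false_neg_parts2 (d : ctx2) (w : nat -> nat -> bool) (X Y : form) :
  rel2 d true false false -> feval w (plug2 d X Y) = false ->
  feval w X = true /\ feval w Y = true.
Proof.
  intros R E. split.
  - rewrite plug2_hole1 in E. exact (false_neg_part _ _ _ (rel2_hole1 _ _ _ _ Y R) E).
  - rewrite plug2_hole2 in E. exact (false_neg_part _ _ _ (rel2_hole2 _ _ _ _ X R) E).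
Qed.

(* Closed formulas F[B_+, B_-] are provable: whatever the value of B,
   one of its two occurrences makes F true. *)
Lemma closed_Hprov (F : form) : closed_form F -> Hprov F.
Proof.
  intros [d [B [R ->]]]. apply valid_Hprov. intros w.
  destruct (feval w B) eqn:E.
  - rewrite plug2_hole1. exact (part_value _ _ _ _ _ (rel2_hole1 _ _ _ _ B R) E).
  - rewrite plug2_hole2. exact (part_value _ _ _ _ _ (rel2_hole2 _ _ _ _ B R) E).
Qed.

(* The (v-) rule is sound: G follows from G v ~B and G v ~C, because a
   false G makes its negative part B v C true. *)
Lemma rule_or_sound (G G1 G2 : form) :
  rule_or G G1 G2 -> Hprov G1 -> Hprov G2 -> Hprov G.
Proof.
  intros [c [B [C [N [-> [-> ->]]]]]] H1 H2.
  apply (Hprov_conseq2 _ _ _ H1 H2). intros w E1 E2. simpl in *.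
  destruct (feval w (plug c (Or B C))) eqn:EG; auto.
  pose proof (false_neg_part _ _ _ N EG) as EBC. simpl in EBC.
  destruct (feval w B), (feval w C); discriminate.
Qed.

(* Schema of the epsilon rules: if every valuation falsifying G satisfies
   the hypothesis [Hyp] of an axiom [Hyp > Z], then G follows from G v ~Z. *)
Lemma extend_by_axiom (G Hyp Z : form) :
  Hprov (Or G (Not Z)) -> Hprov (Imp Hyp Z) ->
  (forall w, feval w G = false -> feval w Hyp = true) -> Hprov G.
Proof.
  intros HG HAx Hsem. apply (Hprov_conseq2 _ _ _ HG HAx). intros w E1 E2.
  simpl in *. destruct (feval w G) eqn:EG; auto.
  rewrite (Hsem w EG) in E2. simpl in E2. rewrite E2 in E1. discriminate.
Qed.

Lemma rule_eps_sound (G G' : form) : rule_eps G G' -> Hprov G' -> Hprov G.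
Proof.
  intros [[c [a [b [N [-> ->]]]]]
        | [[d [a [b [c [R [-> ->]]]]]] | [d [a [b [R [-> ->]]]]]]] H.
  - apply (extend_by_axiom _ _ _ H (H_ax1 a b)).
    intros w EG. exact (false_neg_part _ _ _ N EG).
  - apply (extend_by_axiom _ _ _ H (H_ax2 a b c)).
    intros w EG. destruct (false_neg_parts2 _ _ _ _ R EG) as [Eab Ebc].
    simpl in *. rewrite Eab, Ebc. reflexivity.
  - apply (extend_by_axiom _ _ _ H (H_ax3 a b)).
    intros w EG. destruct (false_neg_parts2 _ _ _ _ R EG) as [Eab Ebb].
    simpl in *. rewrite Eab, Ebb. reflexivity.
Qed.

Lemma closed_tableau_root (t : tree) :
  is_tableau t -> all_closed t -> Hprov (root t).
Proof.
  induction t as [F | F t1 IH1 | F t1 IH1 t2 IH2]; simpl.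
  - intros _ Hclosed. exact (closed_Hprov F Hclosed).
  - intros [Hrule Ht1] Hc1. exact (rule_eps_sound _ _ Hrule (IH1 Ht1 Hc1)).
  - intros [Hrule [Ht1 Ht2]] [Hc1 Hc2].
    exact (rule_or_sound _ _ _ Hrule (IH1 Ht1 Hc1) (IH2 Ht2 Hc2)).
Qed.

Theorem theorem2p2 : forall A : form, Tprov A -> Hprov A.
Proof.
  intros A [t [<- [Htab Hclosed]]]. exact (closed_tableau_root t Htab Hclosed).
Qed.
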